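(* Let $(X,d)$ be a finite ultrametric space with $|X|\geqslant 2$ and $X\cap\operatorname{Sp}(X)=\varnothing$. Then $(X,d)\in\mathfrak U$ if and only if the representing tree $T_X$ of $(X,d)$ is strictly binary and distinct internal nodes of $T_X$ carry distinct labels.
   Context: $\operatorname{Sp}(X)=\{d(x,y):x\neq y\}$, $\operatorname{diam}X=\max d(x,y)$; $\mathfrak U$ is the class of finite ultrametric spaces $X$ with $|\operatorname{Sp}(X)|=|X|-1$. For a finite ultrametric space with $|X|\ge2$, the relation $x\sim y\iff d(x,y)<\operatorname{diam}X$ is an equivalence relation with $k\geqslant 2$ classes $X_1,\dots,X_k$; these are the parts of the diametral graph $G_d$ (vertices $X$, edges the pairs at distance $\operatorname{diam}X$), which is complete $k$-partite $G[X_1,\dots,X_k]$. The representing tree $T_X$ (a labelled rooted tree) is defined recursively: if $X=\{x\}$, $T_X$ is a single node labelled $x$. If $|X|\geqslant2$, the root is labelled $\operatorname{diam}X$ and has $k$ children, one for each part $X_i$, the child for $X_i$ being labelled $\operatorname{diam}X_i$ if $|X_i|\ge2$ and labelled $x$ if $X_i=\{x\}$; the subtree below the child for $X_i$ with $|X_i|\ge 2$ is built from the subspace $X_i$ in the same way. Thus leaves are labelled by the points of $X$ (bijectively) and internal nodes by elements of $\operatorname{Sp}(X)$. A strictly binary tree is a rooted tree whose root is adjacent to exactly two nodes and whose non-root internal nodes (non-leaves) are adjacent to exactly three nodes; a one-node tree is strictly binary. *)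

From HB Require Import structures.
From mathcomp Require Import all_boot all_order all_algebra.
From mathcomp Require Import reals.
Set Implicit Arguments. Unset Strict Implicit. Unset Printing Implicit Defensive.
Import Order.TTheory GRing.Theory Num.Theory.
Local Open Scope ring_scope.

Inductive ltree (L : Type) : Type := LNode of L & seq (ltree L).

Section Trees.
Variable L : eqType.

(* Strictly binary: the root (if it is not a leaf) is adjacent to exactly two
   nodes, i.e. has exactly 2 children; every non-root internal node is adjacent
   to exactly three nodes (its parent and its children), i.e. has exactly
   2 children. *)
Fixpoint strictly_binary (t : ltree L) : bool :=
  let: LNode _ ts := t in
  ((size ts == 0%N) || (size ts == 2%N)) &&
  (fix all_sb (us : seq (ltree L)) : bool :=
     if us is u :: us' then strictly_binary u && all_sb us' else true) ts.

Fixpoint internal_labels (t : ltree L) : seq L :=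
  let: LNode a ts := t in
  (if ts is [::] then [::] else [:: a]) ++
  (fix labs (us : seq (ltree L)) : seq L :=
     if us is u :: us' then internal_labels u ++ labs us' else [::]) ts.

Definition internal_labels_distinct (t : ltree L) : bool :=
  uniq (internal_labels t).
End Trees.

Section Ultrametric.
Variables (R : realType) (T : finType) (d : T -> T -> R).

Definition is_ultrametric : Prop :=
  [/\ forall x y, 0 <= d x y,
      forall x y, d x y = 0 <-> x = y,
      forall x y, d x y = d y x &
      forall x y z, d x z <= Num.max (d x y) (d y z)].

Definition spectrum : seq R :=
  undup [seq d p.1 p.2 | p <- enum [set p : T * T | p.1 != p.2]].

Definition in_frakU : Prop :=
  is_ultrametric /\ size spectrum = (#|T| - 1)%N.

(* diam A = max of d(x,y) over x, y in A (0 for |A| <= 1) *)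
Definition diam (A : {set T}) : R :=
  \big[Num.max/0]_(x in A) \big[Num.max/0]_(y in A) d x y.

Definition diam_parts (A : {set T}) : {set {set T}} :=
  equivalence_partition (fun x y => d x y < diam A) A.

Definition leaf_of (A : {set T}) : ltree (T + R) :=
  match [pick x in A] with
  | Some x => LNode (inl x) [::]
  | None => LNode (inr 0) [::]   (* A empty: never used *)
  end.

(* The recursive construction of the representing tree of the subspace A;
   n is fuel (#|A| <= n suffices). Leaves are labelled by points (inl),
   internal nodes by diameters (inr). *)
Fixpoint rep_tree_aux (n : nat) (A : {set T}) : ltree (T + R) :=
  if n is n'.+1 then
    if (1 < #|A|)%N then
      LNode (inr (diam A)) [seq rep_tree_aux n' B | B <- enum (diam_parts A)]
    else leaf_of A
  else leaf_of A.

Definition rep_tree : ltree (T + R) := rep_tree_aux #|T| [set: T].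
End Ultrametric.

From HB Require Import structures.
From mathcomp Require Import all_boot all_order all_algebra.
From mathcomp Require Import reals.
Import Order.TTheory GRing.Theory Num.Theory.
Set Implicit Arguments. Unset Strict Implicit. Unset Printing Implicit Defensive.
Local Open Scope ring_scope.

(* Every internal node of T_A has at least two children and the leaves of T_A
   are the points of A, so T_A has at most |A| - 1 internal nodes, with equality
   exactly when every internal node has two children.  The labels of the
   internal nodes are exactly the distances realised in A, so
   |Sp(A)| <= #internal nodes <= |A| - 1, and |Sp(X)| = |X| - 1 forces both
   inequalities to be equalities.  The paper's hypothesis X ∩ Sp(X) = ∅ is
   built into the encoding: points are inl-labels and distances inr-labels. *)

Lemma strictly_binary_node (L : eqType) (a : L) (ts : seq (ltree L)) :
  strictly_binary (LNode a ts) =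
  ((size ts == 0%N) || (size ts == 2%N)) && all (@strictly_binary L) ts.
Proof. by rewrite /=; congr (_ && _); elim: ts => //= u us ->. Qed.

Lemma internal_labels_node (L : eqType) (a : L) (ts : seq (ltree L)) :
  (0 < size ts)%N ->
  internal_labels (LNode a ts) = a :: flatten (map (@internal_labels L) ts).
Proof.
case: ts => // u us _ /=; congr (_ :: _).
by elim: us u => //= v vs IH u; rewrite IH.
Qed.

Lemma size_undup_leqif (T : eqType) (s : seq T) :
  (size (undup s) <= size s ?= iff uniq s)%N.
Proof.
apply/leqifP; case: ifP => [/undup_id -> // | /negbT].
by rewrite ltn_size_undup.
Qed.

Section RepresentingTree.
Variables (R : realType) (T : finType) (d : T -> T -> R).
Hypothesis d_ultra : is_ultrametric d.

Definition spec (A : {set T}) : pred R :=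
  [pred r | [exists x in A, exists y in A, (x != y) && (r == d x y)]].

Lemma dist_gt0 x y : x != y -> 0 < d x y.
Proof.
have [d_ge0 d_eq0 _ _] := d_ultra; move=> xy.
by rewrite lt_neqAle d_ge0 andbT eq_sym; apply: contra_neq xy => /d_eq0.
Qed.

Lemma dist_le_diam (A : {set T}) x y : x \in A -> y \in A -> d x y <= diam d A.
Proof. by move=> xA yA; apply: (bigmax_sup x) => //; apply: (bigmax_sup y). Qed.

Lemma diam_gt0 (A : {set T}) : (1 < #|A|)%N -> 0 < diam d A.
Proof.
case/card_gt1P=> [x [y [xA yA xy]]].
exact: lt_le_trans (dist_gt0 xy) (dist_le_diam xA yA).
Qed.

Lemma diam_attained (A : {set T}) : (1 < #|A|)%N ->
  exists x y, [/\ x \in A, y \in A, x != y & diam d A = d x y].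
Proof.
move=> A_gt1; have [d_ge0 d_eq0 _ _] := d_ultra.
have /card_gt1P [x0 [_ [x0A _ _]]] := A_gt1.
have [x xA] := @eq_bigmax _ _ _ 0 x0 [in A]
  (fun x => \big[Num.max/0]_(y in A) d x y) x0A
  (fun i _ => bigmax_sup x0 _ _ _ x0A (d_ge0 i x0)).
have [y yA Dxy] := @eq_bigmax _ _ _ 0 x0 [in A] (d x) x0A (fun i _ => d_ge0 x i).
rewrite {}Dxy => Dd; exists x, y; split=> //.
apply: contraTneq (diam_gt0 A_gt1) => xy.
by rewrite /diam Dd xy (proj2 (d_eq0 y y)) ?ltxx.
Qed.

Lemma spec_card_gt1 (A : {set T}) r : r \in spec A -> (1 < #|A|)%N.
Proof.
case/existsP=> x /andP [xA /existsP [y /and3P [yA xy _]]].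
by apply/card_gt1P; exists x, y.
Qed.

Section Parts.
Variable A : {set T}.
Hypothesis A_gt1 : (1 < #|A|)%N.

Lemma diam_rel_equiv :
  {in A & &, equivalence_rel (fun x y => d x y < diam d A)}.
Proof.
have [_ d_eq0 d_sym d_max] := d_ultra.
move=> x y z _ _ _; split; first by rewrite (proj2 (d_eq0 z z)) ?diam_gt0.
move=> dxy; apply/idP/idP => [dxz | dyz].
  by apply: le_lt_trans (d_max y x z) _; rewrite gt_max d_sym dxy.
by apply: le_lt_trans (d_max x y z) _; rewrite gt_max dxy.
Qed.

Lemma diam_parts_partition : partition (diam_parts d A) A.
Proof. exact: equivalence_partitionP diam_rel_equiv. Qed.

Lemma mem_pblock_diam_parts : {in A &, forall x y,
  (y \in pblock (diam_parts d A) x) = (d x y < diam d A)}.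
Proof. exact: pblock_equivalence_partition diam_rel_equiv. Qed.

Lemma pblock_diam_parts_neq x y :
  x \in A -> y \in A -> diam d A = d x y ->
  pblock (diam_parts d A) x != pblock (diam_parts d A) y.
Proof.
move=> xA yA Dd; apply/eqP => Exy.
have : y \in pblock (diam_parts d A) x.
  by rewrite Exy mem_pblock (cover_partition diam_parts_partition).
by rewrite mem_pblock_diam_parts // -Dd ltxx.
Qed.

Lemma card_diam_parts_gt1 : (1 < #|diam_parts d A|)%N.
Proof.
have [x [y [xA yA _ Dd]]] := diam_attained A_gt1.
apply/card_gt1P; exists (pblock (diam_parts d A) x), (pblock (diam_parts d A) y).
by rewrite !pblock_mem ?(cover_partition diam_parts_partition) ?pblock_diam_parts_neq.
Qed.

Lemma card_diam_parts_mem B : B \in diam_parts d A -> (0 < #|B| < #|A|)%N.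
Proof.
have partP := diam_parts_partition; move=> BP.
rewrite card_gt0 (partition_neq0 partP BP) proper_card // properE.
rewrite (partitionS partP BP) /=; apply/negP => sAB.
have [x [y [xA yA _ Dd]]] := diam_attained A_gt1.
move: (pblock_diam_parts_neq xA yA Dd).
by rewrite !(def_pblock (partition_trivIset partP) BP) ?eqxx // (subsetP sAB).
Qed.

Lemma spec_diam_parts r :
  (r \in spec A) = (r == diam d A) || [exists B in diam_parts d A, r \in spec B].
Proof.
have partP := diam_parts_partition.
apply/idP/orP => [|[/eqP -> | /existsP [B /andP [BP rB]]]].
- case/existsP=> x /andP [xA /existsP [y /and3P [yA xy /eqP ->]]].
  have [-> | dxy_lt] := eqVneq (d x y) (diam d A); first by left.
  have {}dxy_lt : d x y < diam d A by rewrite lt_neqAle dxy_lt dist_le_diam.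
  right; apply/existsP; exists (pblock (diam_parts d A) x).
  rewrite pblock_mem ?(cover_partition partP) //=.
  apply/existsP; exists x; rewrite mem_pblock (cover_partition partP) xA /=.
  by apply/existsP; exists y; rewrite mem_pblock_diam_parts ?dxy_lt ?xy /=.
- have [x [y [xA yA xy Dd]]] := diam_attained A_gt1.
  by apply/existsP; exists x; rewrite xA; apply/existsP; exists y; rewrite yA xy Dd /=.
- have sBA := subsetP (partitionS partP BP).
  case/existsP: rB => x /andP [xB /existsP [y /andP [yB xyr]]].
  by apply/existsP; exists x; rewrite sBA //; apply/existsP; exists y; rewrite sBA.
Qed.

End Parts.

Lemma rep_tree_aux_leaf n (A : {set T}) : (#|A| <= 1)%N ->
  exists a, rep_tree_aux d n A = LNode a [::].
Proof.
have leaf_ofE : exists a, leaf_of R A = LNode a [::].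
  by rewrite /leaf_of; case: pickP => [x _|_]; eexists.
by case: n => [|n] //= A_le1; rewrite ltnNge A_le1.
Qed.

Lemma rep_tree_aux_node n (A : {set T}) : (1 < #|A|)%N ->
  rep_tree_aux d n.+1 A =
  LNode (inr (diam d A)) [seq rep_tree_aux d n B | B <- enum (diam_parts d A)].
Proof. by move=> /= ->. Qed.

Lemma internal_labels_rep_tree_aux_node n (A : {set T}) : (1 < #|A|)%N ->
  internal_labels (rep_tree_aux d n.+1 A) =
  inr (diam d A) ::
    flatten [seq internal_labels (rep_tree_aux d n B) | B <- enum (diam_parts d A)].
Proof.
move=> A_gt1; rewrite rep_tree_aux_node // internal_labels_node -?map_comp //.
by rewrite size_map -cardE ltnW ?card_diam_parts_gt1.
Qed.

Lemma size_internal_labels_rep_tree_aux n (A : {set T}) : (1 < #|A|)%N ->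
  size (internal_labels (rep_tree_aux d n.+1 A)) =
  (\sum_(B in diam_parts d A) size (internal_labels (rep_tree_aux d n B))).+1.
Proof.
move=> A_gt1; rewrite internal_labels_rep_tree_aux_node //.
by rewrite /= size_flatten /shape -map_comp sumnE big_map big_enum.
Qed.

Lemma internal_labels_rep_tree_aux_leqif n (A : {set T}) :
  (0 < #|A| <= n)%N ->
  ((size (internal_labels (rep_tree_aux d n A))).+1 <= #|A|
     ?= iff strictly_binary (rep_tree_aux d n A))%N.
Proof.
elim: n A => [|n IH] A /andP [A_gt0 A_le]; first by rewrite leqNgt A_gt0 in A_le.
have [A_le1 | A_gt1] := leqP #|A| 1.
  have [a ->] := rep_tree_aux_leaf n.+1 A_le1.
  by rewrite (@anti_leq #|A| 1) ?A_le1 //; apply/leqif_refl.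
have parts_gt1 := card_diam_parts_gt1 A_gt1.
rewrite size_internal_labels_rep_tree_aux //.
rewrite (card_partition (diam_parts_partition A_gt1)).
rewrite rep_tree_aux_node // strictly_binary_node all_map size_map -cardE.
rewrite (gtn_eqF (ltnW parts_gt1)) /= -addn2.
set S := (\sum_(B in _) _)%N.
apply: (@leqif_trans _ (S + #|diam_parts d A|)).
  apply/leqifP; rewrite eqn_add2l ltn_add2l.
  by case: ifP => [/eqP -> // | /negbT ne2]; rewrite ltn_neqAle eq_sym ne2.
rewrite /S -sum1_card -big_split /= -big_all big_enum big_andE.
apply: leqif_sum => B BP; rewrite addn1; apply: IH.
have /andP [-> B_lt] := card_diam_parts_mem A_gt1 BP.
by rewrite -ltnS (leq_trans B_lt).
Qed.

Lemma mem_internal_labels_rep_tree_aux n (A : {set T}) z : (#|A| <= n)%N ->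
  (z \in internal_labels (rep_tree_aux d n A)) =
  if z is inr r then r \in spec A else false.
Proof.
have leafE m (A' : {set T}) z' : (#|A'| <= 1)%N ->
    (z' \in internal_labels (rep_tree_aux d m A')) =
    if z' is inr r then r \in spec A' else false.
  move=> A_le1; have [a ->] := rep_tree_aux_leaf m A_le1.
  by case: z' => // r; apply/esym/negbTE/negP => /spec_card_gt1; rewrite ltnNge A_le1.
elim: n A z => [|n IH] A z A_le; have [/leafE // | A_gt1] := leqP #|A| 1.
  by rewrite ltnNge (leq_trans A_le) in A_gt1.
have IHB B : B \in diam_parts d A ->
    (z \in internal_labels (rep_tree_aux d n B)) =
    if z is inr r then r \in spec B else false.
  move=> BP; apply: IH; have /andP [_ B_lt] := card_diam_parts_mem A_gt1 BP.
  by rewrite -ltnS (leq_trans B_lt).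
rewrite internal_labels_rep_tree_aux_node // in_cons; case: z IHB => [x | r] IHB.
  apply/negbTE/flatten_mapP => [[B]]; rewrite mem_enum => BP /=.
  by rewrite IHB.
rewrite spec_diam_parts //=; congr (_ || _); apply/flatten_mapP/existsP.
  by case=> B; rewrite mem_enum => BP /=; rewrite IHB // => rB; exists B; rewrite BP.
by case=> B /andP [BP rB]; exists B; rewrite ?mem_enum //= IHB.
Qed.

Lemma mem_spectrum r : (r \in spectrum d) = (r \in spec [set: T]).
Proof.
rewrite /spectrum mem_undup; apply/mapP/existsP => [[[x y]] | [x]].
  rewrite mem_enum inE /= => xy ->; exists x.
  by rewrite in_setT; apply/existsP; exists y; rewrite in_setT xy eqxx.
case/andP=> _ /existsP [y /and3P [_ xy /eqP ->]].
by exists (x, y); rewrite ?mem_enum ?inE.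
Qed.

Lemma size_spectrum :
  size (spectrum d) = size (undup (internal_labels (rep_tree d))).
Proof.
rewrite -(size_map (@inr T R)); apply/perm_size/uniq_perm; rewrite ?undup_uniq //.
  by rewrite map_inj_uniq ?undup_uniq // => r s [].
move=> z; rewrite mem_undup mem_internal_labels_rep_tree_aux ?cardsT //.
case: z => [x | r]; last by rewrite mem_map ?mem_spectrum // => s t [].
by apply/mapP => [[]].
Qed.
End RepresentingTree.

Theorem theorem13 (R : realType) (T : finType) (d : T -> T -> R) :
  is_ultrametric d -> (2 <= #|T|)%N ->
  (in_frakU d <->
   strictly_binary (rep_tree d) /\ internal_labels_distinct (rep_tree d)).
Proof.
move=> d_ultra T_ge2; set t := rep_tree d.
have labels_leqif :
    ((size (internal_labels t)).+1 <= #|T| ?= iff strictly_binary t)%N.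
  rewrite -cardsT; apply: internal_labels_rep_tree_aux_leqif => //.
  by rewrite cardsT leqnn andbT ltnW.
have undup_leqif :
    ((size (undup (internal_labels t))).+1 <= (size (internal_labels t)).+1
       ?= iff uniq (internal_labels t))%N.
  by apply/leqifP; rewrite eqSS ltnS; apply/leqifP/size_undup_leqif.
have [_ spectrum_eq] := leqif_trans undup_leqif labels_leqif.
have spectrum_full : (size (spectrum d) == #|T| - 1)%N =
    uniq (internal_labels t) && strictly_binary t.
  by rewrite size_spectrum // -eqSS subn1 prednK ?spectrum_eq ?(ltnW T_ge2).
rewrite /in_frakU /internal_labels_distinct; split.
  by case=> _ /eqP; rewrite spectrum_full => /andP [].
by case=> sb uq; split=> //; apply/eqP; rewrite spectrum_full uq sb.
Qed.
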